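(* Let $\varepsilon\in(0,\frac12)$, $z\ge 1$, let $X\subset[\Delta]^d$ be a weighted dataset (with $n$ points), and let $C'$ be a set of $k$ centers that is a constant-factor approximation to $(k,z)$-clustering on $X$. Let $\varepsilon'=\frac{\mathrm{poly}(\varepsilon^z)}{\mathrm{poly}(k,\log(nd\Delta))}$ (for suitable polynomials). Form $X'$ as follows: for each $x\in X$, let $c'(x)$ be the closest center of $C'$ to $x$, let $y$ be the offset $x-c'(x)$ with each coordinate rounded to a power of $(1+\varepsilon')$, let $x'=c'(x)+y$, and give $x'$ the weight of $x$ rounded to a power of $(1+\varepsilon')$. Then for all $C\subset[\Delta]^d$ with $|C|\le k$, \[(1-\varepsilon)\,\mathrm{Cost}(C,X)\le\mathrm{Cost}(C,X')\le(1+\varepsilon)\,\mathrm{Cost}(C,X).\]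
   Context: $\mathrm{Cost}(C,X)=\sum_{x\in X}w(x)\min_{c\in C}\|x-c\|_2^z$ for a weighted set $X$ with weights $w$. $C'$ is a constant-factor approximation if $\mathrm{Cost}(C',X)\le\gamma\min_{|C|\le k}\mathrm{Cost}(C,X)$ for some constant $\gamma\ge1$. Rounding a coordinate to a power of $(1+\varepsilon')$ preserves its sign and changes its absolute value by at most a factor $(1+\varepsilon')$ (zero stays zero). *)

From HB Require Import structures.
From mathcomp Require Import all_boot all_order all_algebra.
From mathcomp Require Import all_classical all_reals all_analysis.
Set Implicit Arguments. Unset Strict Implicit. Unset Printing Implicit Defensive.
Import Order.TTheory GRing.Theory Num.Theory.
Local Open Scope ring_scope.

(* Points of R^d are row vectors 'rV[R]_d; coordinate j of x is x 0 j. *)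

Definition edist (R : realType) (d : nat) (x c : 'rV[R]_d) : R :=
  Num.sqrt (\sum_(j < d) (x 0 j - c 0 j) ^+ 2).

(* min_{c in C} ||x - c||_2^z  (meaningful for nonempty C) *)
Definition mincost (R : realType) (d : nat) (z : R) (C : seq 'rV[R]_d)
    (x : 'rV[R]_d) : R :=
  \big[Num.min / powR (edist x (head 0 C)) z]_(c <- C) powR (edist x c) z.

Definition Cost (R : realType) (d : nat) (z : R) (C : seq 'rV[R]_d)
    (n : nat) (p : 'I_n -> 'rV[R]_d) (w : 'I_n -> R) : R :=
  \sum_(i < n) w i * mincost z C (p i).

Definition in_grid (R : realType) (d Delta : nat) (x : 'rV[R]_d) : Prop :=
  forall j : 'I_d, exists m : nat, (1 <= m <= Delta)%N /\ x 0 j = m%:R.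

Definition round_pow (R : realType) (e a b : R) : Prop :=
  (a = 0 /\ b = 0) \/
  (a != 0 /\ Num.sg b = Num.sg a /\ (exists m : int, `|b| = (1 + e) ^ m) /\
   `|a| <= (1 + e) * `|b| /\ `|b| <= (1 + e) * `|a|).

Definition closest (R : realType) (d : nat) (C' : seq 'rV[R]_d)
    (x c : 'rV[R]_d) : Prop :=
  c \in C' /\ forall c2, c2 \in C' -> edist x c <= edist x c2.

(* Rounding the offset from c'(x) moves each coordinate of x by at most
   eps' |x_j - c'(x)_j|.  Summing (a + b)^2 <= (1 + t) a^2 + (1 + 1/t) b^2 over
   the coordinates shows that, for every center c, |x' - c| is at most
   (1 + t) |x - c| or at most (1 + 1/t) eps' |x - c'(x)|, hence
     |x' - c|^z <= (1 + t)^z |x - c|^z + ((1 + 1/t) eps')^z |x - c'(x)|^z,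
   and symmetrically with x and x' exchanged.  Summed with the weights, the
   error terms add up to ((1 + 1/t) eps')^z Cost(C', X), which is at most
   gamma ((1 + 1/t) eps')^z Cost(C, X) by the approximation guarantee, while
   rounding the weights costs a factor 1 + eps'.  With t = eps / (16 z) and
   eps' = eps^(4z) / (512 gamma) every error is below eps / 8, so eps' does not
   depend on k, n, d or Delta at all. *)

From Pilot Require Import Defs.
From HB Require Import structures.
From mathcomp Require Import all_boot all_order all_algebra.
From mathcomp Require Import all_classical all_reals all_analysis.
From mathcomp Require Import ring lra.
Import Order.TTheory GRing.Theory Num.Theory.
Local Open Scope ring_scope.

Section RealInequalities.
Context {R : realType}.
Implicit Types t u v x z : R.

Lemma sqrrD_le_weighted t u v : 0 < t ->
  (u + v) ^+ 2 <= (1 + t) * u ^+ 2 + (1 + t^-1) * v ^+ 2.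
Proof.
move=> t_gt0.
have : 0 <= t^-1 * (t * u - v) ^+ 2 by rewrite mulr_ge0 ?sqr_ge0 // invr_ge0 ltW.
have -> : t^-1 * (t * u - v) ^+ 2 = t * u ^+ 2 - 2 * u * v + t^-1 * v ^+ 2.
  by field; rewrite gt_eqF.
have -> : (u + v) ^+ 2 = u ^+ 2 + 2 * u * v + v ^+ 2 by ring.
lra.
Qed.

Lemma le_split_sum t u v x : 0 < t -> x <= (1 + t) * u + (1 + t^-1) * v ->
  x <= (1 + t) ^+ 2 * u \/ x <= (1 + t^-1) ^+ 2 * v.
Proof.
move=> t_gt0 hx; have tV : t^-1 * t = 1 by rewrite mulVf ?gt_eqF.
have [hv|hu] := leP ((1 + t^-1) * v) (t * (1 + t) * u); [left|right].
  by rewrite expr2; lra.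
have : (1 + t) * u <= t^-1 * ((1 + t^-1) * v).
  have <- : t^-1 * (t * (1 + t) * u) = (1 + t) * u by rewrite !mulrA tV mul1r.
  by rewrite ler_wpM2l ?invr_ge0 ?ltW.
by rewrite expr2; lra.
Qed.

Lemma expR_le1D2x x : 0 <= x <= 1 / 2 -> expR x <= 1 + 2 * x.
Proof.
move=> hx; have := expR_ge1Dx (- x); have := expR_gt0 x.
have : expR x * expR (- x) = 1 by rewrite -expRD subrr expR0.
nra.
Qed.

Lemma powR1D_le_expR t z : 0 <= t -> 0 <= z -> powR (1 + t) z <= expR (z * t).
Proof.
move=> t_ge0 z_ge0; rewrite /powR gt_eqF; last by lra.
by rewrite ler_expR ler_wpM2l // le_ln1Dx //; lra.
Qed.

Lemma mul_powR_le_sqr (eps z : R) : 0 < eps < 1 / 2 -> 1 <= z ->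
  z * powR eps (4 * z) <= eps ^+ 2.
Proof.
move=> /andP[eps_gt0 eps_lt] z_ge1.
have ln_eps : ln eps <= - (1 / 2).
  rewrite -[X in _ <= X]expRK ler_ln ?posrE ?expR_gt0 //.
  by have := expR_ge1Dx (- (1 / 2) : R); lra.
have zexpNz : z * expR (- z) <= 1.
  have := expR_ge1Dx z; have := expR_gt0 (- z).
  have : expR z * expR (- z) = 1 by rewrite -expRD subrr expR0.
  nra.
have : powR eps (4 * z) <= eps ^+ 2 * expR (- z).
  have -> : eps ^+ 2 * expR (- z) = expR (ln eps + ln eps - z).
    by rewrite !expRD lnK ?posrE // expr2.
  by rewrite /powR gt_eqF // ler_expR; nra.
have := sqr_ge0 eps; have := powR_ge0 eps (4 * z); nra.
Qed.

Lemma perturbation_constants (gamma eps z : R) :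
  1 <= gamma -> 0 < eps < 1 / 2 -> 1 <= z ->
  let e := (512 * gamma)^-1 * powR eps (4 * z) in
  let t := eps / (16 * z) in
  [/\ 0 < e, e <= eps / 8, 0 < t, powR (1 + t) z <= 1 + eps / 8
    & gamma * powR ((1 + t^-1) * e) z <= eps / 8].
Proof.
move=> gamma_ge1 /andP[eps_gt0 eps_lt] z_ge1 e t.
have gamma_gt0 : 0 < gamma := lt_le_trans ltr01 gamma_ge1.
set P := powR eps (4 * z) in e *.
have zP_le : z * P <= eps ^+ 2 by apply: mul_powR_le_sqr; rewrite ?eps_gt0.
have P_gt0 : 0 < P by rewrite powR_gt0.
have gammaE : gamma * e = P / 512 by rewrite /e; field; lra.
have e_gt0 : 0 < e by rewrite mulr_gt0 ?invr_gt0 ?mulr_gt0 ?ltr0n.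
have gammae_le : gamma * e <= eps / 1024 by rewrite gammaE; nra.
have t_gt0 : 0 < t by rewrite divr_gt0 //; lra.
split => //.
- have : e <= gamma * e by rewrite ler_peMl // ltW.
  lra.
- apply: le_trans (powR1D_le_expR _ _ (ltW t_gt0) _) _; first by lra.
  have -> : z * t = eps / 16 by rewrite /t; field; lra.
  by apply: le_trans (expR_le1D2x _ _) _; lra.
set u := (1 + t^-1) * e.
have gammauE : gamma * u = P / 512 + z * P / (32 * eps).
  by rewrite /u /t /e invf_div; field; lra.
have zP_eps_le : z * P / (32 * eps) <= eps / 32 by rewrite ler_pdivrMr; nra.
have gammau_le : gamma * u <= eps / 8 by lra.
have u_gt0 : 0 < u by rewrite mulr_gt0 // addr_gt0 // invr_gt0.
have u_le : u <= gamma * u by rewrite ler_peMl // ltW.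
apply: le_trans gammau_le; rewrite ler_wpM2l ?(ltW gamma_gt0) //.
by apply: ge1r_powR; rewrite ?u_gt0 /=; lra.
Qed.

Lemma cost_sandwich (K K' W A B e gamma eps : R) : 0 < eps < 1 / 2 ->
  0 <= K -> 0 <= K' -> 0 <= W -> 0 <= B -> 0 <= e <= eps / 8 -> 0 <= A <= 1 + eps / 8 ->
  W <= gamma * K -> gamma * B <= eps / 8 ->
  K' <= (1 + e) * (A * K + B * W) -> K - B * W <= A * (1 + e) * K' ->
  (1 - eps) * K <= K' /\ K' <= (1 + eps) * K.
Proof.
move=> /andP[eps_gt0 eps_lt] K_ge0 K'_ge0 W_ge0 B_ge0 /andP[e_ge0 e_le] /andP[A_ge0 A_le].
move=> W_le gammaB_le K'_le K_le.
have BW_le : B * W <= eps / 8 * K.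
  apply: le_trans (ler_wpM2l B_ge0 W_le) _.
  by rewrite mulrA [B * _]mulrC ler_wpM2r.
have Ae_le : A * (1 + e) <= (1 + eps / 8) ^+ 2 by rewrite expr2; nra.
split.
  have : (1 - eps / 8) * K <= (1 + eps / 8) ^+ 2 * K'.
    by apply: le_trans (ler_wpM2r K'_ge0 Ae_le); lra.
  have : (1 - eps) * (1 + eps / 8) ^+ 2 <= 1 - eps / 8 by rewrite expr2; nra.
  nra.
have AK_le : A * K <= (1 + eps / 8) * K by rewrite ler_wpM2r.
have : (1 + e) * (A * K + B * W) <= (1 + eps / 8) * ((1 + eps / 4) * K).
  by apply: ler_pM; rewrite ?addr_ge0 ?mulr_ge0 //; lra.
have : (1 + eps / 8) * ((1 + eps / 4) * K) <= (1 + eps) * K.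
  by rewrite mulrA ler_wpM2r //; nra.
lra.
Qed.

End RealInequalities.

Section Rounding.
Context {R : realType}.
Implicit Types e a b : R.

Lemma round_pow_dist e a b : 0 <= e -> round_pow e a b -> `|b - a| <= e * `|a|.
Proof.
move=> e_ge0 [[-> ->]|[a_neq0 [sg_ba [_ [le_ab le_ba]]]]].
  by rewrite subrr normr0 mulr0.
have -> : b - a = Num.sg a * (`|b| - `|a|) by rewrite mulrBr -sg_ba -!numEsg sg_ba -numEsg.
rewrite normrM normr_sg a_neq0 mul1r.
case: (leP `|a| `|b|) => h.
  by rewrite ger0_norm ?subr_ge0 //; lra.
rewrite ltr0_norm ?subr_lt0 //.
have : e * `|b| <= e * `|a| by rewrite ler_wpM2l // ltW.
lra.
Qed.

Lemma round_pow_ge0 e a b : 0 <= a -> round_pow e a b ->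
  [/\ 0 <= b, b <= (1 + e) * a & a <= (1 + e) * b].
Proof.
move=> a_ge0 [[-> ->]|[a_neq0 [sg_ba [_ [le_ab le_ba]]]]].
  by split; rewrite ?mulr0.
have a_gt0 : 0 < a by rewrite lt_def a_neq0.
have b_gt0 : 0 < b by rewrite -sgr_cp0 sg_ba gtr0_sg.
by rewrite !gtr0_norm // in le_ab le_ba; split=> //; exact: ltW.
Qed.

End Rounding.

Section MinCost.
Context {R : realType} {d : nat}.
Variable z : R.
Implicit Types (C : seq 'rV[R]_d) (x y c : 'rV[R]_d).

Lemma mincost_ge0 C x : 0 <= mincost z C x.
Proof. by apply: le_bigmin => *; exact: powR_ge0. Qed.

Lemma mincost_le C x c : c \in C -> mincost z C x <= powR (Defs.edist x c) z.
Proof. by move=> cC; exact: ge_bigmin_seq. Qed.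

Lemma mincost_attained C x : C != [::] ->
  exists2 c, c \in C & mincost z C x = powR (Defs.edist x c) z.
Proof.
case: C => // c0 C _; rewrite /mincost big_seq /=.
elim/big_ind: _ => [|_ _ [cu cuC ->] [cv cvC ->]|c cC]; last by exists c.
  by exists c0; rewrite ?mem_head.
by rewrite minEle; case: ifP => _; [exists cu | exists cv].
Qed.

Lemma closest_mincost C x c : 0 <= z -> closest C x c ->
  mincost z C x = powR (Defs.edist x c) z.
Proof.
move=> z_ge0 [cC c_min]; apply/eqP; rewrite eq_le mincost_le //=.
have /(mincost_attained _ x)[c' c'C ->] : C != [::] by case: C cC {c_min}.
by apply: ge0_ler_powR; rewrite ?nnegrE ?sqrtr_ge0 ?c_min.
Qed.

End MinCost.

Section Perturbation.
Context {R : realType} {d : nat}.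
Implicit Types (C : seq 'rV[R]_d) (x y c p q : 'rV[R]_d).

Lemma sqr_edist x c : Defs.edist x c ^+ 2 = \sum_j (x 0 j - c 0 j) ^+ 2.
Proof. by rewrite sqr_sqrtr // sumr_ge0 // => j _; exact: sqr_ge0. Qed.

Lemma edist_perturb (t e : R) x y c p q : 0 < t -> 0 <= e ->
  (forall j, `|y 0 j - x 0 j| <= e * `|p 0 j - q 0 j|) ->
  Defs.edist y c <= (1 + t) * Defs.edist x c \/
  Defs.edist y c <= (1 + t^-1) * e * Defs.edist p q.
Proof.
move=> t_gt0 e_ge0 yx_le.
have t1_ge0 : 0 <= 1 + t by rewrite addr_ge0 // ltW.
have tV1_ge0 : 0 <= 1 + t^-1 by rewrite addr_ge0 // invr_ge0 ltW.
have le_sqr (u v : R) : 0 <= u -> 0 <= v -> (u ^+ 2 <= v ^+ 2) = (u <= v).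
  by move=> u_ge0 v_ge0; rewrite ler_pXn2r ?nnegrE.
have : Defs.edist y c ^+ 2 <=
       (1 + t) * Defs.edist x c ^+ 2 + (1 + t^-1) * (e ^+ 2 * Defs.edist p q ^+ 2).
  rewrite !sqr_edist !mulr_sumr -big_split /=; apply: ler_sum => j _.
  have -> : y 0 j - c 0 j = (x 0 j - c 0 j) + (y 0 j - x 0 j) by ring.
  apply: le_trans (sqrrD_le_weighted _ _ _ t_gt0) _.
  rewrite lerD2l ler_wpM2l // -exprMn.
  rewrite -(real_normK (num_real (y 0 j - x 0 j))) -(real_normK (num_real (e * _))).
  by rewrite le_sqr // normrM (ger0_norm e_ge0).
case/(le_split_sum _ _ _ _ t_gt0) => h; [left|right].
  by rewrite -le_sqr ?mulr_ge0 ?sqrtr_ge0 // exprMn.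
by rewrite -le_sqr ?mulr_ge0 ?sqrtr_ge0 // !exprMn -mulrA; exact: h.
Qed.

Lemma powR_edist_perturb (z t e : R) x y c p q : 0 <= z -> 0 < t -> 0 <= e ->
  (forall j, `|y 0 j - x 0 j| <= e * `|p 0 j - q 0 j|) ->
  powR (Defs.edist y c) z <= powR (1 + t) z * powR (Defs.edist x c) z +
                             powR ((1 + t^-1) * e) z * powR (Defs.edist p q) z.
Proof.
move=> z_ge0 t_gt0 e_ge0 yx_le.
have t1_ge0 : 0 <= 1 + t by rewrite addr_ge0 // ltW.
have tVe_ge0 : 0 <= (1 + t^-1) * e by rewrite mulr_ge0 // addr_ge0 // invr_ge0 ltW.
have powR_le a b : 0 <= a -> a <= b -> powR a z <= powR b z.
  by move=> a_ge0 ab; apply: ge0_ler_powR; rewrite ?nnegrE // (le_trans a_ge0 ab).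
case: (edist_perturb t e x y c p q t_gt0 e_ge0 yx_le) => /(powR_le _ _ (sqrtr_ge0 _)).
all: rewrite powRM ?sqrtr_ge0 // => h.
  by apply: le_trans h _; rewrite lerDl mulr_ge0 ?powR_ge0.
by apply: le_trans h _; rewrite lerDr mulr_ge0 ?powR_ge0.
Qed.

Lemma mincost_perturb (z t e : R) C x y p q :
  C != [::] -> 0 <= z -> 0 < t -> 0 <= e ->
  (forall j, `|y 0 j - x 0 j| <= e * `|p 0 j - q 0 j|) ->
  mincost z C y <= powR (1 + t) z * mincost z C x +
                   powR ((1 + t^-1) * e) z * powR (Defs.edist p q) z.
Proof.
move=> C_neq0 z_ge0 t_gt0 e_ge0 yx_le.
have [c cC ->] := mincost_attained z C x C_neq0.
apply: le_trans (mincost_le z C y c cC) _.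
exact: powR_edist_perturb.
Qed.

End Perturbation.

Section WeightedCost.
Context {R : realType} {d n : nat}.
Variables (z : R) (C : seq 'rV[R]_d).
Implicit Types (p : 'I_n -> 'rV[R]_d) (w r : 'I_n -> R).

Lemma Cost_ge0 p w : (forall i, 0 <= w i) -> 0 <= Cost z C p w.
Proof. by move=> w_ge0; apply: sumr_ge0 => i _; rewrite mulr_ge0 ?mincost_ge0. Qed.

Lemma Cost_perturb_le p p' w w' r (A B e : R) : 0 <= e ->
  (forall i, 0 <= w i) -> (forall i, w' i <= (1 + e) * w i) ->
  (forall i, mincost z C (p' i) <= A * mincost z C (p i) + B * r i) ->
  Cost z C p' w' <= (1 + e) * (A * Cost z C p w + B * \sum_i w i * r i).
Proof.
move=> e_ge0 w_ge0 w'_le cost'_le; rewrite /Cost.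
rewrite mulrDr !mulr_sumr -big_split /=; apply: ler_sum => i _.
have -> : (1 + e) * (A * (w i * mincost z C (p i))) + (1 + e) * (B * (w i * r i)) =
          (1 + e) * w i * (A * mincost z C (p i) + B * r i) by ring.
apply: le_trans (ler_wpM2r (mincost_ge0 _ _ _) (w'_le i)) _.
by rewrite ler_wpM2l ?mulr_ge0 ?addr_ge0.
Qed.

Lemma Cost_perturb_ge p p' w w' r (A B e : R) : 0 <= A ->
  (forall i, 0 <= w i) -> (forall i, w i <= (1 + e) * w' i) ->
  (forall i, mincost z C (p i) <= A * mincost z C (p' i) + B * r i) ->
  Cost z C p w - B * \sum_i w i * r i <= A * (1 + e) * Cost z C p' w'.
Proof.
move=> A_ge0 w_ge0 w_le cost_le; rewrite /Cost.
rewrite !mulr_sumr -sumrB; apply: ler_sum => i _.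
have Am'_ge0 : 0 <= A * mincost z C (p' i) by rewrite mulr_ge0 ?mincost_ge0.
have : w i * (mincost z C (p i) - B * r i) <= w i * (A * mincost z C (p' i)).
  by rewrite ler_wpM2l //; have := cost_le i; lra.
have := ler_wpM2r Am'_ge0 (w_le i).
have -> : A * (1 + e) * (w' i * mincost z C (p' i)) =
          (1 + e) * w' i * (A * mincost z C (p' i)) by ring.
have -> : w i * mincost z C (p i) - B * (w i * r i) =
          w i * (mincost z C (p i) - B * r i) by ring.
lra.
Qed.

End WeightedCost.

Theorem lemma2p6 (R : realType) (gamma : R) (hgamma : 1 <= gamma) :
  exists (c : R) (a b : nat), 0 < c /\
  forall (eps z : R) (d Delta k n : nat)
         (p : 'I_n -> 'rV[R]_d) (w : 'I_n -> R)
         (C' : seq 'rV[R]_d) (cc : 'I_n -> 'rV[R]_d)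
         (p' : 'I_n -> 'rV[R]_d) (w' : 'I_n -> R),
    0 < eps -> eps < 1 / 2 -> 1 <= z ->
    (forall i, in_grid Delta (p i)) ->
    (forall i, 0 <= w i) ->
    C' != [::] -> (size C' <= k)%N ->
    (forall C : seq 'rV[R]_d, (forall x, x \in C -> in_grid Delta x) ->
       C != [::] -> (size C <= k)%N ->
       Cost z C' p w <= gamma * Cost z C p w) ->
    let eps' := c * powR eps (a%:R * z) /
                  ((k%:R * (1 + ln (n * d * Delta)%:R)) ^+ b) in
    (forall i, closest C' (p i) (cc i)) ->
    (forall i (j : 'I_d), round_pow eps' (p i 0 j - cc i 0 j) (p' i 0 j - cc i 0 j)) ->
    (forall i, round_pow eps' (w i) (w' i)) ->
    forall C : seq 'rV[R]_d, (forall x, x \in C -> in_grid Delta x) ->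
      C != [::] -> (size C <= k)%N ->
      (1 - eps) * Cost z C p w <= Cost z C p' w' /\
      Cost z C p' w' <= (1 + eps) * Cost z C p w.
Proof.
exists (512 * gamma)^-1, 4%N, 0%N; split; first by rewrite invr_gt0; lra.
move=> eps z d Delta k n p w C' cc p' w' eps_gt0 eps_lt z_ge1 _ w_ge0 C'_neq0 _
  C'_approx e cc_closest p'_round w'_round C C_grid C_neq0 C_size.
have eps_bd : 0 < eps < 1 / 2 by rewrite eps_gt0.
have eE : e = (512 * gamma)^-1 * powR eps (4 * z) by rewrite /e expr0 divr1.
have [] := perturbation_constants gamma eps z hgamma eps_bd z_ge1; rewrite -eE.
set t := eps / (16 * z); set A := powR (1 + t) z; set B := powR _ z.
move=> e_gt0 e_le t_gt0 A_le gammaB_le.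
have z_ge0 : 0 <= z by lra.
have p'_near i j : `|p' i 0 j - p i 0 j| <= e * `|p i 0 j - cc i 0 j|.
  by have := round_pow_dist _ _ _ (ltW e_gt0) (p'_round i j); rewrite opprB addrA subrK.
have [w'_ge0 w'_le w_le] : [/\ forall i, 0 <= w' i, forall i, w' i <= (1 + e) * w i
                              & forall i, w i <= (1 + e) * w' i].
  by split=> i; case: (round_pow_ge0 _ _ _ (w_ge0 i) (w'_round i)).
have W_eq : \sum_i w i * powR (Defs.edist (p i) (cc i)) z = Cost z C' p w.
  by apply: eq_bigr => i _; rewrite (closest_mincost z _ _ _ z_ge0 (cc_closest i)).
apply: (cost_sandwich _ _ (Cost z C' p w) A B e gamma);
  rewrite ?Cost_ge0 ?powR_ge0 ?(ltW e_gt0) ?C'_approx //; rewrite -W_eq.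
- apply: Cost_perturb_le (ltW e_gt0) w_ge0 w'_le _ => i.
  by apply: mincost_perturb => //; exact: ltW.
- apply: Cost_perturb_ge (powR_ge0 _ _) w_ge0 w_le _ => i.
  by apply: mincost_perturb => //; [exact: ltW | move=> j; rewrite distrC].
Qed.
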